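(* For an integer $n \ge 1$ and $p \in [0,1)$ let \[ \Lambda_n(p) := \log \rho \bigl( \mathrm{Bin}(n,p), \mathrm{Poiss}(np) \bigr) . \] Then $\Lambda_n$ is a continuous and strictly increasing function of $p \in [0,1)$ with $\Lambda_n(0) = 0$, and for $0 < p < 1$, \[ \Lambda_n(p) < - \log(1-p) \quad\text{and}\quad \Lambda_n(p) < - \tfrac{1}{2}\log\bigl(1 - \lceil np \rceil/n\bigr) . \] More precisely, with $k := \lceil np \rceil$, for $0<p<1$, \[ \Lambda_n(p) + \frac{\log(1-p)}{2} \ < \ - \frac{k-1}{12 n (n-k+1)} + \frac{1}{8(n-k) + 6} \] and \[ \Lambda_n(p) + \frac{\log(1-p)}{2} \ > \ - \frac{k-1}{12 n (n-k+1)} - \frac{1}{12 (n-k)(n-k+1)} . \]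
   Context: $\mathrm{Bin}(n,p)$ is the binomial and $\mathrm{Poiss}(\lambda)$ the Poisson distribution on $\{0,1,2,\ldots\}$. For probability measures $Q,P$ on $(\mathcal{X},\mathcal{A})$, $\rho(Q,P) := \sup_{A \in \mathcal{A}} Q(A)/P(A)$ with conventions $0/0 := 0$, $a/0 := \infty$ for $a>0$. In the lower bound, if $k = n$ the right-hand side is interpreted as $-\infty$ (the term $1/(12(n-k)(n-k+1))$ being $+\infty$). *)

From Stdlib Require Import Reals Lra ZArith.
From Coquelicot Require Import Coquelicot.
Open Scope R_scope.

Definition binom_pmf (n : nat) (p : R) (k : nat) : R :=
  if Nat.leb k n then Binomial.C n k * p ^ k * (1 - p) ^ (n - k) else 0.

(* Probability mass function of Poiss(lam) (with 0^0 = 1, so Poiss(0) = delta_0). *)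
Definition poiss_pmf (lam : R) (k : nat) : R :=
  exp (- lam) * lam ^ k / INR (fact k).

(* Subsets A of {0,1,2,...} (all subsets are measurable: power set),
   represented by their indicator A : nat -> bool. *)
Definition binom_prob (n : nat) (p : R) (A : nat -> bool) : R :=
  sum_f_R0 (fun k => if A k then binom_pmf n p k else 0) n.

Definition poiss_prob (lam : R) (A : nat -> bool) : R :=
  Series (fun k => if A k then poiss_pmf lam k else 0).

(* Q(A)/P(A) with conventions 0/0 := 0 and a/0 := +oo for a > 0. *)
Definition ratio (q p : R) : Rbar :=
  if Req_EM_T p 0 then (if Req_EM_T q 0 then Finite 0 else p_infty)
  else Finite (q / p).

Definition rho_bin_poiss (n : nat) (p : R) : Rbar :=
  Rbar_lub (fun r => exists A : nat -> bool,
              r = ratio (binom_prob n p A) (poiss_prob (INR n * p) A)).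

(* Lambda_n(p) = log rho(Bin(n,p), Poiss(np)) (rho is shown finite in the theorem). *)
Definition Lambda (n : nat) (p : R) : R := ln (real (rho_bin_poiss n p)).

Definition ceilR (x : R) : Z := (- Int_part (- x))%Z.

From Stdlib Require Import Reals ZArith Lra Lia Psatz.
From Coquelicot Require Import Coquelicot.
Open Scope R_scope.

(* The supremum defining rho is attained at a singleton, so rho is the largest
   likelihood ratio Bin(n,p){k} / Poiss(np){k}.  Consecutive ratios differ by the
   factor (n - k) / (n (1 - p)), so the largest one sits at k = ceil(np); on each
   interval k - 1 <= np <= k, Lambda_n(p) = ln (n! / ((n-k)! n^k)) + np + (n-k) ln (1-p)
   is increasing, and these pieces glue continuously.  Expanding ln (n! / j!) by
   Stirling's formula with exact remainder sum_(j <= i < n) d_i, where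
   d_i = (i + 1/2) ln (1 + 1/i) - 1, turns Lambda_n(p) + ln (1-p) / 2 into an explicit
   function of u = n (1-p) minus a tail of the d_i.  The bounds then follow from
   1/(12 i (i+1)) - (1/(320 i^3) - 1/(320 (i+1)^3)) <= d_i < 1/(12 i (i+1)), which
   telescope, together with ln x <= x - 1 and ln x >= 2 (x-1) / (x+1). *)

Lemma ln_lt_sub1 x : 0 < x -> x <> 1 -> ln x < x - 1.
Proof.
  intros Hx Hx1.
  assert (Hln : ln x <> 0).
  { intro E. apply Hx1. rewrite <- (exp_ln x Hx), E. apply exp_0. }
  pose proof (exp_ineq1 _ Hln) as Hexp. rewrite exp_ln in Hexp by lra. lra.
Qed.

Lemma ln_le_sub1 x : 0 < x -> ln x <= x - 1.
Proof.
  intros Hx. destruct (Req_dec x 1) as [->|Hx1].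
  - rewrite ln_1. lra.
  - left. now apply ln_lt_sub1.
Qed.

Lemma mul_ln_div_le c u : 0 < c -> 0 < u -> c * ln (u / c) <= u - c.
Proof.
  intros Hc Hu.
  pose proof (ln_le_sub1 (u / c) ltac:(apply Rdiv_lt_0_compat; lra)).
  replace (u - c) with (c * (u / c - 1)) by (field; lra).
  apply Rmult_le_compat_l; lra.
Qed.

Lemma mul_ln_div_lt c u : 0 < c -> 0 < u -> u <> c -> c * ln (u / c) < u - c.
Proof.
  intros Hc Hu Huc.
  assert (Hne : u / c <> 1).
  { intro E. apply Huc. apply (f_equal (fun t => t * c)) in E.
    unfold Rdiv in E. rewrite Rmult_assoc, Rinv_l in E by lra. lra. }
  pose proof (ln_lt_sub1 (u / c) ltac:(apply Rdiv_lt_0_compat; lra) Hne).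
  replace (u - c) with (c * (u / c - 1)) by (field; lra).
  apply Rmult_lt_compat_l; lra.
Qed.

Lemma ln_div_split u c d : 0 < u -> 0 < c -> 0 < d -> ln (u / d) = ln (u / c) + ln (c / d).
Proof.
  intros Hu Hc Hd. rewrite <- ln_mult by (apply Rdiv_lt_0_compat; lra).
  f_equal. field. lra.
Qed.

Lemma derive_pos_lt (f df : R -> R) a b : a < b ->
  (forall x, a <= x <= b -> is_derive f x (df x)) ->
  (forall x, a < x < b -> 0 < df x) -> f a < f b.
Proof.
  intros Hab Hd Hpos.
  destruct (MVT_cor2 f df a b Hab) as [c [Hc Hcab]].
  { intros c Hc. apply is_derive_Reals. now apply Hd. }
  pose proof (Hpos c Hcab). nra.
Qed.

Lemma derive_nonneg_le (f df : R -> R) a b : a <= b ->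
  (forall x, a <= x <= b -> is_derive f x (df x)) ->
  (forall x, a < x < b -> 0 <= df x) -> f a <= f b.
Proof.
  intros Hab Hd Hpos. destruct (Req_dec a b) as [->|Hne]; [lra|].
  destruct (MVT_cor2 f df a b) as [c [Hc Hcab]]; [lra| |].
  { intros c Hc. apply is_derive_Reals. now apply Hd. }
  pose proof (Hpos c Hcab). nra.
Qed.

Lemma two_atanh_ge z : 0 <= z < 1 ->
  2 * z + 2 * z ^ 3 / 3 + 2 * z ^ 5 / 5 <= ln (1 + z) - ln (1 - z).
Proof.
  intros Hz.
  pose (f t := ln (1 + t) - ln (1 - t) - (2 * t + 2 * t ^ 3 / 3 + 2 * t ^ 5 / 5)).
  assert (Hf : f 0 <= f z).
  { apply (derive_nonneg_le f (fun t => 2 * t ^ 6 / (1 - t ^ 2))); [lra| |].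
    - intros t Ht. unfold f. auto_derive; [repeat split; lra|].
      field. repeat split; try lra; nra.
    - intros t Ht. apply Rdiv_le_0_compat; [pose proof (pow_le t 6); lra | nra]. }
  unfold f in Hf. rewrite Rplus_0_r, Rminus_0_r, ln_1 in Hf. lra.
Qed.

Lemma two_atanh_lt z : 0 < z < 1 ->
  ln (1 + z) - ln (1 - z) < 2 * z + 2 / 3 * z ^ 3 / (1 - z ^ 2).
Proof.
  intros Hz.
  pose (f t := 2 * t + 2 / 3 * t ^ 3 / (1 - t ^ 2) - (ln (1 + t) - ln (1 - t))).
  assert (Hf : f 0 < f z).
  { apply (derive_pos_lt f (fun t => 4 / 3 * t ^ 4 / (1 - t ^ 2) ^ 2)); [lra| |].
    - intros t Ht. unfold f. auto_derive; [repeat split; try lra; nra|].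
      field. split; try lra; nra.
    - intros t Ht. apply Rdiv_lt_0_compat; [pose proof (pow_lt t 4); lra|].
      apply pow_lt. nra. }
  unfold f in Hf. rewrite Rplus_0_r, Rminus_0_r, ln_1 in Hf.
  replace (2 * 0 + 2 / 3 * 0 ^ 3 / (1 - 0 ^ 2) - (0 - 0)) with 0 in Hf by field. lra.
Qed.

Lemma ln_1p_ge y : 0 <= y -> y - y ^ 2 / 2 + y ^ 3 / 3 - y ^ 4 / 4 <= ln (1 + y).
Proof.
  intros Hy.
  pose (f t := ln (1 + t) - (t - t ^ 2 / 2 + t ^ 3 / 3 - t ^ 4 / 4)).
  assert (Hf : f 0 <= f y).
  { apply (derive_nonneg_le f (fun t => t ^ 4 / (1 + t))); [lra| |].
    - intros t Ht. unfold f. auto_derive; [lra|]. field. lra.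
    - intros t Ht. apply Rdiv_le_0_compat; [pose proof (pow_le t 4); lra | lra]. }
  unfold f in Hf. rewrite Rplus_0_r, ln_1 in Hf. lra.
Qed.

Lemma ln_ge_two_mul_div x : 1 <= x -> 2 * (x - 1) / (x + 1) <= ln x.
Proof.
  intros Hx. set (z := (x - 1) / (x + 1)).
  assert (Hz : 0 <= z < 1).
  { unfold z. split; [apply Rdiv_le_0_compat; lra|].
    apply (Rmult_lt_reg_r (x + 1)); [lra|]. unfold Rdiv. rewrite Rmult_assoc, Rinv_l by lra. lra. }
  pose proof (two_atanh_ge z Hz).
  pose proof (pow_le z 3 (proj1 Hz)). pose proof (pow_le z 5 (proj1 Hz)).
  replace (ln (1 + z) - ln (1 - z)) with (ln x) in H.
  - replace (2 * (x - 1) / (x + 1)) with (2 * z) by (unfold z; field; lra). lra.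
  - rewrite <- ln_div by lra. f_equal. unfold z. field. lra.
Qed.

Lemma ln2_gt : 2 / 3 + 1 / 160 < ln 2.
Proof.
  pose proof (two_atanh_ge (/ 3) ltac:(lra)) as Hlow.
  replace (ln (1 + / 3) - ln (1 - / 3)) with (ln 2) in Hlow.
  - lra.
  - rewrite <- ln_div by lra. f_equal. field.
Qed.

Lemma sub_le_mid_mul_ln_div c u : 0 < c -> c <= u <= c + 1 ->
  u - c <= (c + / 2) * ln (u / c).
Proof.
  intros Hc Hu.
  assert (Hlow : 2 * (u / c - 1) / (u / c + 1) <= ln (u / c)).
  { apply ln_ge_two_mul_div. apply Rle_div_r; lra. }
  assert (E : (c + / 2) * (2 * (u / c - 1) / (u / c + 1))
              = u - c + (u - c) * (c + 1 - u) / (u + c)) by (field; lra).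
  assert (0 <= (u - c) * (c + 1 - u) / (u + c))
    by (apply Rdiv_le_0_compat; [apply Rmult_le_pos |]; lra).
  eapply Rle_trans; [|apply Rmult_le_compat_l; [lra | exact Hlow]]. lra.
Qed.

(* At [m = 0] the quartic lower bound on [ln 2] is too weak, hence [ln2_gt]. *)
Lemma half_sub_mid_mul_ln_lt (m : nat) :
  / 2 - (INR m + / 2) * ln (1 + / (2 * INR m + 1)) + / (320 * (INR m + 1) ^ 3)
    < / (8 * INR m + 6).
Proof.
  destruct m as [|m'].
  - simpl. replace (1 + / (2 * 0 + 1)) with 2 by field. pose proof ln2_gt. lra.
  - set (x := INR (S m')).
    assert (Hx : 1 <= x) by (unfold x; rewrite S_INR; pose proof (pos_INR m'); lra).
    set (y := / (2 * x + 1)).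
    assert (Hy : 0 <= y) by (unfold y; left; apply Rinv_0_lt_compat; lra).
    pose proof (ln_1p_ge y Hy) as Hln.
    assert (Hmul : (x + / 2) * (y - y ^ 2 / 2 + y ^ 3 / 3 - y ^ 4 / 4) <= (x + / 2) * ln (1 + y))
      by (apply Rmult_le_compat_l; lra).
    (* In terms of [t = 2 x - 2 >= 0] the numerator below has positive coefficients. *)
    set (t := 2 * x - 2).
    assert (Ht : 0 <= t) by (unfold t; lra).
    assert (E : / (8 * x + 6) - (/ 2 - (x + / 2) * (y - y ^ 2 / 2 + y ^ 3 / 3 - y ^ 4 / 4)
                                 + / (320 * (x + 1) ^ 3))
                = (18504 + 37048 * t + 25832 * t ^ 2 + 8400 * t ^ 3 + 1312 * t ^ 4 + 80 * t ^ 5)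
                  / (960 * (2 * x + 1) ^ 3 * (2 * (2 * x + 1) + 1) * (2 * x + 2) ^ 3)).
    { unfold y, t. field. lra. }
    assert (0 < (18504 + 37048 * t + 25832 * t ^ 2 + 8400 * t ^ 3 + 1312 * t ^ 4 + 80 * t ^ 5)
                / (960 * (2 * x + 1) ^ 3 * (2 * (2 * x + 1) + 1) * (2 * x + 2) ^ 3)).
    { apply Rdiv_lt_0_compat.
      - pose proof (pow_le t 2 Ht); pose proof (pow_le t 3 Ht); pose proof (pow_le t 4 Ht);
        pose proof (pow_le t 5 Ht). lra.
      - repeat apply Rmult_lt_0_compat; try lra; apply pow_lt; lra. }
    lra.
Qed.

Definition stirling_defect (j : nat) : R :=
  (INR j + / 2) * (ln (INR j + 1) - ln (INR j)) - 1.

Lemma ln_succ_sub_ln_atanh x : 0 < x ->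
  ln (x + 1) - ln x = ln (1 + / (2 * x + 1)) - ln (1 - / (2 * x + 1)).
Proof.
  intros Hx.
  replace (1 + / (2 * x + 1)) with (2 * (x + 1) / (2 * x + 1)) by (field; lra).
  replace (1 - / (2 * x + 1)) with (2 * x / (2 * x + 1)) by (field; lra).
  rewrite !ln_div, !ln_mult by lra. ring.
Qed.

Lemma inv_2x1_bounds x : 0 < x -> 0 < / (2 * x + 1) < 1.
Proof.
  intros Hx. split; [apply Rinv_0_lt_compat; lra|].
  rewrite <- Rinv_1. apply Rinv_lt_contravar; lra.
Qed.

Lemma stirling_defect_lt j : (0 < j)%nat ->
  stirling_defect j < / (12 * INR j * (INR j + 1)).
Proof.
  intros Hj. assert (HJ : 0 < INR j) by (apply lt_0_INR; lia).
  unfold stirling_defect. rewrite ln_succ_sub_ln_atanh by lra.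
  set (z := / (2 * INR j + 1)).
  assert (Hz : 0 < z < 1) by apply (inv_2x1_bounds _ HJ).
  pose proof (two_atanh_lt z Hz) as Hup.
  replace (INR j + / 2) with (/ (2 * z)) by (unfold z; field; lra).
  apply Rlt_le_trans with (/ (2 * z) * (2 * z + 2 / 3 * z ^ 3 / (1 - z ^ 2)) - 1).
  - apply Rplus_lt_compat_r, Rmult_lt_compat_l; [apply Rinv_0_lt_compat; lra | exact Hup].
  - right. unfold z. field. repeat split; try lra. nra.
Qed.

(* The cubic correction is chosen so that the lower bound telescopes too. *)
Lemma stirling_defect_ge j : (0 < j)%nat ->
  / (12 * INR j * (INR j + 1)) - (/ (320 * INR j ^ 3) - / (320 * (INR j + 1) ^ 3))
    <= stirling_defect j.
Proof.
  intros Hj. assert (HJ : 0 < INR j) by (apply lt_0_INR; lia).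
  unfold stirling_defect. rewrite ln_succ_sub_ln_atanh by lra.
  set (x := INR j) in *. set (z := / (2 * x + 1)).
  assert (Hz : 0 < z < 1) by apply (inv_2x1_bounds _ HJ).
  pose proof (two_atanh_ge z ltac:(lra)) as Hlow.
  assert (Hseries : z ^ 2 / 3 + z ^ 4 / 5 <= (x + / 2) * (ln (1 + z) - ln (1 - z)) - 1).
  { replace (x + / 2) with (/ (2 * z)) by (unfold z; field; lra).
    apply Rle_trans with (/ (2 * z) * (2 * z + 2 * z ^ 3 / 3 + 2 * z ^ 5 / 5) - 1).
    - right. field. lra.
    - apply Rplus_le_compat_r, Rmult_le_compat_l; [left; apply Rinv_0_lt_compat; lra | exact Hlow]. }
  assert (Hgap : z ^ 2 / 3 + z ^ 4 / 5
                 - (/ (12 * x * (x + 1)) - (/ (320 * x ^ 3) - / (320 * (x + 1) ^ 3)))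
                 = (3 + 33 * x + 73 * x ^ 2 + 96 * x ^ 3 + 88 * x ^ 4 + 48 * x ^ 5 + 16 * x ^ 6)
                   / (960 * (2 * x + 1) ^ 4 * x ^ 3 * (x + 1) ^ 3)).
  { unfold z. field. lra. }
  assert (Hpos : 0 <= (3 + 33 * x + 73 * x ^ 2 + 96 * x ^ 3 + 88 * x ^ 4 + 48 * x ^ 5 + 16 * x ^ 6)
                      / (960 * (2 * x + 1) ^ 4 * x ^ 3 * (x + 1) ^ 3)).
  { apply Rdiv_le_0_compat.
    - pose proof (pow_lt x 2 HJ); pose proof (pow_lt x 3 HJ); pose proof (pow_lt x 4 HJ);
      pose proof (pow_lt x 5 HJ); pose proof (pow_lt x 6 HJ). lra.
    - repeat apply Rmult_lt_0_compat; try lra; apply pow_lt; lra. }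
  lra.
Qed.

Lemma stirling_defect_pos j : (0 < j)%nat -> 0 < stirling_defect j.
Proof.
  intros Hj. assert (HJ : 0 < INR j) by (apply lt_0_INR; lia).
  eapply Rlt_le_trans; [|apply (stirling_defect_ge j Hj)].
  assert (E : / (12 * INR j * (INR j + 1)) - (/ (320 * INR j ^ 3) - / (320 * (INR j + 1) ^ 3))
              = (80 * INR j ^ 4 + 160 * INR j ^ 3 + 71 * INR j ^ 2 - 9 * INR j - 3)
                / (960 * INR j ^ 3 * (INR j + 1) ^ 3)) by (field; lra).
  rewrite E. apply Rdiv_lt_0_compat.
  - assert (1 <= INR j) by (replace 1 with (INR 1) by reflexivity; apply le_INR; lia). nra.
  - repeat apply Rmult_lt_0_compat; try lra; apply pow_lt; lra.
Qed.

Fixpoint defect_sum (j t : nat) : R :=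
  match t with
  | O => 0
  | S t' => stirling_defect j + defect_sum (S j) t'
  end.

Lemma defect_sum_nonneg j t : (0 < j)%nat -> 0 <= defect_sum j t.
Proof.
  revert j; induction t as [|t IH]; intros j Hj; simpl; [lra|].
  pose proof (stirling_defect_pos j Hj). pose proof (IH (S j) ltac:(lia)). lra.
Qed.

Lemma defect_sum_pos j t : (0 < j)%nat -> (0 < t)%nat -> 0 < defect_sum j t.
Proof.
  intros Hj Ht. destruct t as [|t]; [lia|]. simpl.
  pose proof (stirling_defect_pos j Hj). pose proof (defect_sum_nonneg (S j) t ltac:(lia)). lra.
Qed.

Lemma defect_sum_lt j t : (0 < j)%nat -> (0 < t)%nat ->
  defect_sum j t < / (12 * INR j) - / (12 * INR (j + t)).
Proof.
  revert j; induction t as [|t IH]; intros j Hj Ht; [lia|].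
  assert (HJ : 0 < INR j) by (apply lt_0_INR; lia).
  simpl defect_sum. pose proof (stirling_defect_lt j Hj) as Hd.
  replace (/ (12 * INR j * (INR j + 1))) with (/ (12 * INR j) - / (12 * INR (S j))) in Hd
    by (rewrite S_INR; field; lra).
  destruct t as [|t].
  - simpl. rewrite Nat.add_1_r. lra.
  - pose proof (IH (S j) ltac:(lia) ltac:(lia)) as Hs.
    replace (S j + S t)%nat with (j + S (S t))%nat in Hs by lia. lra.
Qed.

Lemma defect_sum_ge j t : (0 < j)%nat ->
  / (12 * INR j) - / (12 * INR (j + t)) - (/ (320 * INR j ^ 3) - / (320 * INR (j + t) ^ 3))
    <= defect_sum j t.
Proof.
  revert j; induction t as [|t IH]; intros j Hj; simpl defect_sum.
  - rewrite Nat.add_0_r. lra.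
  - assert (HJ : 0 < INR j) by (apply lt_0_INR; lia).
    pose proof (stirling_defect_ge j Hj) as Hd.
    replace (/ (12 * INR j * (INR j + 1))) with (/ (12 * INR j) - / (12 * (INR j + 1))) in Hd
      by (field; lra).
    pose proof (IH (S j) ltac:(lia)) as Hs.
    replace (S j + t)%nat with (j + S t)%nat in Hs by lia.
    rewrite S_INR in Hs. lra.
Qed.

Definition fact_ratio (n j : nat) : R := INR (fact n) / (INR (fact j) * INR n ^ (n - j)).

Lemma fact_ratio_pos n j : (0 < n)%nat -> 0 < fact_ratio n j.
Proof.
  intros Hn. unfold fact_ratio. apply Rdiv_lt_0_compat; [apply INR_fact_lt_0|].
  apply Rmult_lt_0_compat; [apply INR_fact_lt_0 | apply pow_lt, lt_0_INR; lia].
Qed.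

Lemma fact_ratio_succ n j : (j < n)%nat ->
  fact_ratio n j = fact_ratio n (S j) * (INR j + 1) / INR n.
Proof.
  intros Hj. unfold fact_ratio. replace (n - j)%nat with (S (n - S j)) by lia.
  rewrite fact_simpl, mult_INR, S_INR. simpl pow.
  assert (0 < INR n) by (apply lt_0_INR; lia).
  pose proof (INR_fact_neq_0 j). pose proof (pow_lt (INR n) (n - S j) H). pose proof (pos_INR j).
  field. repeat split; lra.
Qed.

(* Stirling's formula for [ln (n! / j!)], with the exact remainder. *)
Lemma ln_fact_ratio n j : (1 <= j <= n)%nat ->
  ln (fact_ratio n j) = - INR (n - j) - (INR j + / 2) * (ln (INR j) - ln (INR n))
                        - defect_sum j (n - j).
Proof.
  remember (n - j)%nat as t eqn:Ht. revert j Ht.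
  induction t as [|t IH]; intros j Ht Hj.
  - replace j with n by lia. unfold fact_ratio. rewrite Nat.sub_diag. simpl.
    replace (INR (fact n) / (INR (fact n) * 1)) with 1 by (field; apply INR_fact_neq_0).
    rewrite ln_1. ring.
  - assert (HJ : 0 < INR j) by (apply lt_0_INR; lia).
    assert (HN : 0 < INR n) by (apply lt_0_INR; lia).
    pose proof (fact_ratio_pos n (S j) ltac:(lia)).
    rewrite fact_ratio_succ by lia.
    rewrite ln_div, ln_mult, (IH (S j)) by (lia || nra).
    simpl defect_sum. replace (n - S j)%nat with t by lia. rewrite !S_INR.
    unfold stirling_defect. ring.
Qed.

(* The likelihood ratio [Bin(n,x){k} / Poiss(nx){k}] for [k <= n]. *)
Definition lik_ratio (n k : nat) (x : R) : R :=
  fact_ratio n (n - k) * exp (INR n * x) * (1 - x) ^ (n - k).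

Lemma lik_ratio_pos n k x : (0 < n)%nat -> x < 1 -> 0 < lik_ratio n k x.
Proof.
  intros Hn Hx. unfold lik_ratio.
  pose proof (fact_ratio_pos n (n - k) Hn). pose proof (exp_pos (INR n * x)).
  pose proof (pow_lt (1 - x) (n - k) ltac:(lra)).
  apply Rmult_lt_0_compat; [apply Rmult_lt_0_compat|]; assumption.
Qed.

Lemma ln_lik_ratio n k x : (0 < n)%nat -> x < 1 ->
  ln (lik_ratio n k x) = ln (fact_ratio n (n - k)) + INR n * x + INR (n - k) * ln (1 - x).
Proof.
  intros Hn Hx. unfold lik_ratio.
  pose proof (fact_ratio_pos n (n - k) Hn). pose proof (exp_pos (INR n * x)).
  pose proof (pow_lt (1 - x) (n - k) ltac:(lra)).
  assert (0 < fact_ratio n (n - k) * exp (INR n * x)) by (apply Rmult_lt_0_compat; assumption).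
  rewrite !ln_mult, ln_exp, ln_pow by (assumption || lra). reflexivity.
Qed.

Lemma binom_pmf_eq n p k : (0 < n)%nat -> (k <= n)%nat -> p < 1 ->
  binom_pmf n p k = lik_ratio n k p * poiss_pmf (INR n * p) k.
Proof.
  intros Hn Hk Hp.
  unfold binom_pmf, poiss_pmf, lik_ratio, fact_ratio, Binomial.C.
  replace (Nat.leb k n) with true by (symmetry; apply Nat.leb_le; lia).
  replace (n - (n - k))%nat with k by lia.
  assert (0 < INR n) by (apply lt_0_INR; lia).
  pose proof (INR_fact_neq_0 (n - k)). pose proof (INR_fact_neq_0 k).
  pose proof (pow_lt (INR n) k H).
  pose proof (exp_pos (INR n * p)).
  rewrite exp_Ropp, Rpow_mult_distr. field. repeat split; lra.
Qed.

Lemma lik_ratio_succ n k x : (k < n)%nat -> x < 1 ->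
  lik_ratio n (S k) x = lik_ratio n k x * INR (n - k) / (INR n * (1 - x)).
Proof.
  intros Hk Hx. unfold lik_ratio.
  rewrite (fact_ratio_succ n (n - S k)) by lia.
  replace (n - k)%nat with (S (n - S k)) by lia.
  rewrite S_INR. simpl pow.
  assert (0 < INR n) by (apply lt_0_INR; lia).
  pose proof (pos_INR (n - S k)).
  field. lra.
Qed.

Lemma lik_ratio_le_succ n k x : (k < n)%nat -> 0 <= x < 1 -> INR k <= INR n * x ->
  lik_ratio n k x <= lik_ratio n (S k) x.
Proof.
  intros Hk Hx Hkx. rewrite lik_ratio_succ by (lia || lra).
  pose proof (lik_ratio_pos n k x ltac:(lia) ltac:(lra)).
  assert (0 < INR n * (1 - x)) by (apply Rmult_lt_0_compat; [apply lt_0_INR; lia | lra]).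
  rewrite <- Rle_div_r by lra. rewrite minus_INR by lia.
  apply Rmult_le_compat_l; lra.
Qed.

Lemma lik_ratio_succ_le n k x : (k < n)%nat -> 0 <= x < 1 -> INR n * x <= INR k ->
  lik_ratio n (S k) x <= lik_ratio n k x.
Proof.
  intros Hk Hx Hkx. rewrite lik_ratio_succ by (lia || lra).
  pose proof (lik_ratio_pos n k x ltac:(lia) ltac:(lra)).
  assert (0 < INR n * (1 - x)) by (apply Rmult_lt_0_compat; [apply lt_0_INR; lia | lra]).
  rewrite Rle_div_l by lra. rewrite minus_INR by lia.
  apply Rmult_le_compat_l; lra.
Qed.

Lemma unimodal_le_mode (f : nat -> R) k n :
  (forall i, (i < k)%nat -> f i <= f (S i)) ->
  (forall i, (k <= i < n)%nat -> f (S i) <= f i) ->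
  forall j, (j <= n)%nat -> f j <= f k.
Proof.
  intros Hup Hdown j Hj. destruct (Nat.le_gt_cases j k) as [Hjk|Hkj].
  - assert (Hclimb : forall d, (d <= k)%nat -> f (k - d)%nat <= f k).
    { induction d as [|d IH]; intros Hd.
      - rewrite Nat.sub_0_r. lra.
      - eapply Rle_trans; [|apply IH; lia].
        replace (k - d)%nat with (S (k - S d)) by lia. apply Hup. lia. }
    replace j with (k - (k - j))%nat by lia. apply Hclimb. lia.
  - assert (Hdescend : forall d, (k + d <= n)%nat -> f (k + d)%nat <= f k).
    { induction d as [|d IH]; intros Hd.
      - rewrite Nat.add_0_r. lra.
      - eapply Rle_trans; [|apply IH; lia].
        rewrite Nat.add_succ_r. apply Hdown. lia. }
    replace j with (k + (j - k))%nat by lia. apply Hdescend. lia.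
Qed.

Lemma lik_ratio_le_mode n k x : (k <= n)%nat -> 0 <= x < 1 ->
  INR k - 1 <= INR n * x <= INR k ->
  forall j, (j <= n)%nat -> lik_ratio n j x <= lik_ratio n k x.
Proof.
  intros Hk Hx Hkx. apply (unimodal_le_mode (fun j => lik_ratio n j x)).
  - intros i Hi. apply lik_ratio_le_succ; [lia | lra |].
    assert (INR (S i) <= INR k) by (apply le_INR; lia). rewrite S_INR in H. lra.
  - intros i Hi. apply lik_ratio_succ_le; [lia | lra |].
    assert (INR k <= INR i) by (apply le_INR; lia). lra.
Qed.

Fixpoint max_upto (f : nat -> R) (n : nat) : R :=
  match n with
  | O => f O
  | S n' => Rmax (max_upto f n') (f (S n'))
  end.

Lemma max_upto_ge f n i : (i <= n)%nat -> f i <= max_upto f n.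
Proof.
  induction n as [|n IH]; intros Hi; simpl.
  - replace i with O by lia. lra.
  - destruct (Nat.eq_dec i (S n)) as [->|Hne]; [apply Rmax_r|].
    eapply Rle_trans; [apply IH; lia | apply Rmax_l].
Qed.

Lemma max_upto_attained f n : exists i, (i <= n)%nat /\ max_upto f n = f i.
Proof.
  induction n as [|n [i [Hi E]]]; simpl; [exists O; split; auto|].
  unfold Rmax. destruct (Rle_dec (max_upto f n) (f (S n))).
  - exists (S n). split; auto.
  - exists i. split; auto.
Qed.

Lemma max_upto_eq f n k : (k <= n)%nat -> (forall j, (j <= n)%nat -> f j <= f k) ->
  max_upto f n = f k.
Proof.
  intros Hk Hmax. destruct (max_upto_attained f n) as [i [Hi E]].
  apply Rle_antisym; [rewrite E; auto | now apply max_upto_ge].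
Qed.

Lemma continuous_Rmax (f g : R -> R) x : continuous f x -> continuous g x ->
  continuous (fun y => Rmax (f y) (g y)) x.
Proof.
  intros Hf Hg.
  apply continuous_ext with
    (fun y => mult (plus (plus (f y) (g y)) (Rabs (minus (f y) (g y)))) (/ 2)).
  { intros y. unfold mult, minus; unfold plus, opp; simpl. unfold Rmax.
    destruct (Rle_dec (f y) (g y)).
    - rewrite Rabs_left1 by lra. field.
    - rewrite Rabs_right by lra. field. }
  apply (continuous_mult (K := R_AbsRing)); [|apply continuous_const].
  apply (continuous_plus (V := R_NormedModule)); [apply (continuous_plus (V := R_NormedModule)); auto|].
  apply continuous_Rabs_comp. apply (continuous_minus (V := R_NormedModule)); auto.
Qed.

Lemma continuous_max_upto (F : nat -> R -> R) n x : (forall k, continuous (F k) x) ->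
  continuous (fun y => max_upto (fun k => F k y) n) x.
Proof.
  intros HF. induction n as [|n IH]; simpl; [apply HF|].
  now apply continuous_Rmax.
Qed.

Definition lik_max (n : nat) (x : R) : R := max_upto (fun k => lik_ratio n k x) n.

Lemma lik_max_pos n x : (0 < n)%nat -> x < 1 -> 0 < lik_max n x.
Proof.
  intros Hn Hx. eapply Rlt_le_trans; [apply (lik_ratio_pos n O x Hn Hx)|].
  apply (max_upto_ge (fun k => lik_ratio n k x)). lia.
Qed.

Lemma lik_max_mode n k x : (k <= n)%nat -> 0 <= x < 1 ->
  INR k - 1 <= INR n * x <= INR k -> lik_max n x = lik_ratio n k x.
Proof.
  intros Hk Hx Hkx. apply (max_upto_eq (fun j => lik_ratio n j x)); auto.
  now apply lik_ratio_le_mode.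
Qed.

Lemma continuous_lik_max n x : continuous (lik_max n) x.
Proof.
  apply (continuous_max_upto (fun k y => lik_ratio n k y)). intros k.
  apply (ex_derive_continuous (K := R_AbsRing) (V := R_NormedModule)).
  unfold lik_ratio. auto_derive. auto.
Qed.

Lemma poiss_pmf_nonneg l k : 0 <= l -> 0 <= poiss_pmf l k.
Proof.
  intros Hl. unfold poiss_pmf. apply Rdiv_le_0_compat; [|apply INR_fact_lt_0].
  apply Rmult_le_pos; [left; apply exp_pos | now apply pow_le].
Qed.

Lemma poiss_pmf_pos l k : 0 < l -> 0 < poiss_pmf l k.
Proof.
  intros Hl. unfold poiss_pmf. apply Rdiv_lt_0_compat; [|apply INR_fact_lt_0].
  apply Rmult_lt_0_compat; [apply exp_pos | now apply pow_lt].
Qed.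

Lemma ex_series_poiss_pmf l (A : nat -> bool) : 0 <= l ->
  ex_series (fun k => if A k then poiss_pmf l k else 0).
Proof.
  intros Hl.
  assert (Hall : ex_series (poiss_pmf l)).
  { apply ex_series_ext with (fun k => scal (exp (- l)) (scal (pow_n l k) (/ INR (fact k)))).
    - intros k. unfold poiss_pmf. rewrite pow_n_pow.
      change (exp (- l) * (l ^ k * / INR (fact k)) = exp (- l) * l ^ k / INR (fact k)).
      unfold Rdiv. ring.
    - apply (@ex_series_scal R_AbsRing R_NormedModule). eexists. exact (is_exp_Reals l). }
  apply (@ex_series_le R_AbsRing R_CompleteNormedModule _ (poiss_pmf l)); [|exact Hall].
  intros k. change (norm (if A k then poiss_pmf l k else 0))
    with (Rabs (if A k then poiss_pmf l k else 0)).
  pose proof (poiss_pmf_nonneg l k Hl).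
  destruct (A k); [rewrite Rabs_right | rewrite Rabs_R0]; lra.
Qed.

Lemma Series_zero : Series (fun _ => 0) = 0.
Proof.
  rewrite (Series_ext _ (fun _ => 0 * 0)) by (intros; ring).
  rewrite Series_scal_l. ring.
Qed.

Lemma poiss_prob_ge_partial l (A : nat -> bool) N : 0 <= l ->
  sum_f_R0 (fun k => if A k then poiss_pmf l k else 0) N <= poiss_prob l A.
Proof.
  intros Hl. unfold poiss_prob.
  rewrite (Series_incr_n _ (S N)) by (lia || now apply ex_series_poiss_pmf).
  simpl Nat.pred.
  assert (0 <= Series (fun k => if A (S N + k)%nat then poiss_pmf l (S N + k) else 0)).
  { apply Rle_trans with (Series (fun _ => 0)); [rewrite Series_zero; lra|].
    apply Series_le.
    - intros k. split; [lra|]. destruct (A _); [now apply poiss_pmf_nonneg | lra].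
    - apply (ex_series_incr_n (fun k => if A k then poiss_pmf l k else 0) (S N)).
      now apply ex_series_poiss_pmf. }
  lra.
Qed.

Lemma poiss_prob_nonneg l (A : nat -> bool) : 0 <= l -> 0 <= poiss_prob l A.
Proof.
  intros Hl. eapply Rle_trans; [|apply (poiss_prob_ge_partial l A 0 Hl)].
  simpl. destruct (A O); [now apply poiss_pmf_nonneg | lra].
Qed.

Lemma binom_prob_nonneg n p (A : nat -> bool) : 0 <= p <= 1 -> 0 <= binom_prob n p A.
Proof.
  intros Hp. unfold binom_prob. apply cond_pos_sum. intros k.
  destruct (A k); [|lra]. unfold binom_pmf, Binomial.C. destruct (Nat.leb k n); [|lra].
  pose proof (pow_le p k ltac:(lra)). pose proof (pow_le (1 - p) (n - k) ltac:(lra)).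
  assert (0 <= INR (fact n) / (INR (fact k) * INR (fact (n - k)))).
  { apply Rdiv_le_0_compat; [apply pos_INR|].
    apply Rmult_lt_0_compat; apply INR_fact_lt_0. }
  apply Rmult_le_pos; [apply Rmult_le_pos|]; assumption.
Qed.

Lemma sum_f_R0_indicator (f : nat -> R) i N :
  sum_f_R0 (fun k => if Nat.eqb k i then f k else 0) N = if Nat.leb i N then f i else 0.
Proof.
  induction N as [|N IH].
  - destruct i; reflexivity.
  - rewrite tech5, IH. destruct (Nat.eqb_spec (S N) i) as [<-|Hne].
    + rewrite (proj2 (Nat.leb_gt (S N) N)), Nat.leb_refl by lia. ring.
    + destruct (Nat.leb_spec i N); destruct (Nat.leb_spec i (S N)); try lia; ring.
Qed.

Lemma poiss_prob_singleton l i : 0 <= l ->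
  poiss_prob l (fun k => Nat.eqb k i) = poiss_pmf l i.
Proof.
  intros Hl. unfold poiss_prob.
  rewrite (Series_incr_n _ (S i)) by (lia || now apply ex_series_poiss_pmf).
  simpl Nat.pred. rewrite sum_f_R0_indicator, Nat.leb_refl.
  rewrite (Series_ext _ (fun _ => 0)), Series_zero; [ring|].
  intros k. replace (Nat.eqb (S i + k) i) with false by (symmetry; apply Nat.eqb_neq; lia).
  reflexivity.
Qed.

Lemma binom_prob_singleton n p i : (i <= n)%nat ->
  binom_prob n p (fun k => Nat.eqb k i) = binom_pmf n p i.
Proof.
  intros Hi. unfold binom_prob. rewrite sum_f_R0_indicator.
  now rewrite (proj2 (Nat.leb_le i n) Hi).
Qed.

Lemma lub_ratio_eq (Q P : (nat -> bool) -> R) c :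
  (forall A, 0 <= Q A) -> (forall A, 0 <= P A) -> (forall A, Q A <= c * P A) ->
  (exists A, 0 < P A /\ Q A = c * P A) ->
  Rbar_lub (fun r => exists A, r = ratio (Q A) (P A)) = Finite c.
Proof.
  intros HQ HP Hdom [A0 [HPA0 HQA0]].
  assert (Hc : 0 <= c) by (pose proof (HQ A0); nra).
  apply Rbar_is_lub_unique. split.
  - intros r [A ->]. unfold ratio.
    destruct (Req_EM_T (P A) 0) as [E|E].
    + pose proof (Hdom A). pose proof (HQ A). rewrite E in *.
      destruct (Req_EM_T (Q A) 0); [simpl; lra | exfalso; lra].
    + simpl. pose proof (HP A). pose proof (Hdom A).
      apply Rle_div_l; [lra | lra].
  - intros b Hub. apply Hub. exists A0. unfold ratio.
    destruct (Req_EM_T (P A0) 0); [lra|].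
    f_equal. rewrite HQA0. field. lra.
Qed.

Lemma rho_bin_poiss_eq n p : (0 < n)%nat -> 0 <= p < 1 ->
  rho_bin_poiss n p = Finite (lik_max n p).
Proof.
  intros Hn Hp.
  assert (Hl : 0 <= INR n * p) by (apply Rmult_le_pos; [apply pos_INR | lra]).
  apply lub_ratio_eq.
  - intros A. apply binom_prob_nonneg. lra.
  - intros A. now apply poiss_prob_nonneg.
  - intros A. unfold binom_prob.
    eapply Rle_trans; [|apply Rmult_le_compat_l;
      [left; apply lik_max_pos; lia || lra | apply (poiss_prob_ge_partial _ A n Hl)]].
    rewrite scal_sum. apply sum_Rle. intros k Hk. destruct (A k); [|lra].
    rewrite binom_pmf_eq, Rmult_comm by (lia || lra).
    apply Rmult_le_compat_l; [now apply poiss_pmf_nonneg|].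
    apply (max_upto_ge (fun j => lik_ratio n j p)). exact Hk.
  - assert (Hmode : exists i, (i <= n)%nat /\ lik_max n p = lik_ratio n i p
                              /\ 0 < poiss_pmf (INR n * p) i).
    { destruct (Req_dec p 0) as [->|Hp0].
      (* Poiss(0) only charges [0], so at [p = 0] the maximiser must be [0]. *)
      - exists O. split; [lia|]. split.
        + apply lik_max_mode; simpl; lia || lra.
        + unfold poiss_pmf. simpl. rewrite Rmult_0_r, Ropp_0, exp_0. lra.
      - destruct (max_upto_attained (fun j => lik_ratio n j p) n) as [i [Hi E]].
        exists i. split; [exact Hi|]. split; [exact E|].
        apply poiss_pmf_pos, Rmult_lt_0_compat; [apply lt_0_INR | ]; lia || lra. }
    destruct Hmode as [i [Hi [E Hpos]]].
    exists (fun k => Nat.eqb k i).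
    rewrite binom_prob_singleton, poiss_prob_singleton, binom_pmf_eq, E by (lia || lra).
    split; [exact Hpos | reflexivity].
Qed.

Lemma Lambda_eq n p : (0 < n)%nat -> 0 <= p < 1 -> Lambda n p = ln (lik_max n p).
Proof. intros Hn Hp. unfold Lambda. now rewrite rho_bin_poiss_eq. Qed.

Lemma Lambda_mode n k x : (0 < n)%nat -> (k <= n)%nat -> 0 <= x < 1 ->
  INR k - 1 <= INR n * x <= INR k -> Lambda n x = ln (lik_ratio n k x).
Proof. intros Hn Hk Hx Hkx. now rewrite Lambda_eq, (lik_max_mode n k). Qed.

Lemma Lambda_0 n : (0 < n)%nat -> Lambda n 0 = 0.
Proof.
  intros Hn. rewrite (Lambda_mode n 0) by (simpl; lia || lra).
  unfold lik_ratio, fact_ratio. rewrite !Nat.sub_0_r, Nat.sub_diag, Rmult_0_r, exp_0, Rminus_0_r, pow1.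
  simpl. rewrite <- ln_1. f_equal. field. apply INR_fact_neq_0.
Qed.

Lemma Lambda_continuous n p : (0 < n)%nat -> 0 <= p < 1 ->
  filterlim (Lambda n) (within (fun x => 0 <= x < 1) (locally p)) (locally (Lambda n p)).
Proof.
  intros Hn Hp. rewrite Lambda_eq by assumption.
  apply (filterlim_ext_loc (fun x => ln (lik_max n x))).
  - unfold within. apply filter_forall. intros x Hx. symmetry. now apply Lambda_eq.
  - apply (filterlim_filter_le_1 (F := locally p)); [apply filter_le_within|].
    apply (continuous_comp (lik_max n) ln); [apply continuous_lik_max|].
    apply continuous_ln, lik_max_pos; lia || lra.
Qed.

Lemma ln_lik_ratio_lt n k x y : (0 < n)%nat -> (k <= n)%nat -> 0 <= x -> x < y -> y < 1 ->
  INR n * y <= INR k -> ln (lik_ratio n k x) < ln (lik_ratio n k y).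
Proof.
  intros Hn Hk Hx Hxy Hy Hyk.
  rewrite !ln_lik_ratio, minus_INR by (lia || lra).
  apply (derive_pos_lt (fun t => ln (fact_ratio n (n - k)) + INR n * t + (INR n - INR k) * ln (1 - t))
                       (fun t => (INR k - INR n * t) / (1 - t))); [lra| |].
  - intros t Ht. auto_derive; [lra|]. field. lra.
  - intros t Ht. apply Rdiv_lt_0_compat; [|lra].
    assert (INR n * t < INR n * y) by (apply Rmult_lt_compat_l; [apply lt_0_INR | ]; lia || lra).
    lra.
Qed.

Lemma Lambda_lt_below n k : (0 < n)%nat -> (k <= n)%nat ->
  forall p q, 0 <= p -> p < q -> q < 1 -> INR n * q <= INR k -> Lambda n p < Lambda n q.
Proof.
  intros Hn. assert (HN : 0 < INR n) by (apply lt_0_INR; lia).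
  induction k as [|k IH]; intros Hk p q Hp Hpq Hq Hqk; [simpl in Hqk; nra|].
  destruct (Rle_dec (INR n * q) (INR k)) as [Hqk'|Hqk']; [apply IH; auto; lia|].
  rewrite S_INR in Hqk.
  rewrite (Lambda_mode n (S k) q) by (rewrite ?S_INR; lia || lra).
  destruct (Rle_dec (INR k) (INR n * p)) as [Hkp|Hkp].
  - rewrite (Lambda_mode n (S k) p) by (rewrite ?S_INR; lia || nra).
    apply ln_lik_ratio_lt; rewrite ?S_INR; lia || lra.
  - set (r := INR k / INR n).
    assert (Hr : INR n * r = INR k) by (unfold r; field; lra).
    assert (0 <= r) by (unfold r; apply Rdiv_le_0_compat; [apply pos_INR | lra]).
    assert (p < r < q) by (split; nra).
    apply Rlt_trans with (Lambda n r); [apply IH; lia || lra|].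
    rewrite (Lambda_mode n (S k) r) by (rewrite ?S_INR; lia || lra).
    apply ln_lik_ratio_lt; rewrite ?S_INR; lia || lra.
Qed.

Lemma Lambda_lt n p q : (0 < n)%nat -> 0 <= p -> p < q -> q < 1 -> Lambda n p < Lambda n q.
Proof.
  intros Hn Hp Hpq Hq. apply (Lambda_lt_below n n); auto.
  assert (0 < INR n) by (apply lt_0_INR; lia). nra.
Qed.

Lemma Lambda_half_ln_eq_succ n k p : (1 <= k <= n)%nat -> 0 <= p < 1 ->
  INR k - 1 <= INR n * p <= INR k ->
  Lambda n p + ln (1 - p) / 2
  = (INR (n - k) + / 2) * ln (INR n * (1 - p) / (INR (n - k) + 1))
    + (INR (n - k) + 1 - INR n * (1 - p)) - defect_sum (S (n - k)) (k - 1).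
Proof.
  intros Hk Hp Hkp.
  assert (HN : 0 < INR n) by (apply lt_0_INR; lia).
  pose proof (pos_INR (n - k)).
  pose proof (fact_ratio_pos n (S (n - k)) ltac:(lia)).
  rewrite (Lambda_mode n k p), ln_lik_ratio by (lia || lra).
  rewrite fact_ratio_succ, ln_div, ln_mult, ln_fact_ratio by (lia || nra).
  rewrite ln_div, ln_mult by (try apply Rmult_lt_0_compat; lra).
  replace (n - S (n - k))%nat with (k - 1)%nat by lia.
  rewrite (minus_INR k 1), (S_INR (n - k)) by lia. change (INR 1) with 1.
  replace (INR k) with (INR n - INR (n - k)) by (rewrite minus_INR by lia; ring).
  field.
Qed.

Lemma Lambda_half_ln_eq n k p : (1 <= k)%nat -> (k < n)%nat -> 0 <= p < 1 ->
  INR k - 1 <= INR n * p <= INR k ->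
  Lambda n p + ln (1 - p) / 2
  = (INR (n - k) + / 2) * ln (INR n * (1 - p) / INR (n - k))
    + (INR (n - k) - INR n * (1 - p)) - defect_sum (n - k) k.
Proof.
  intros Hk1 Hkn Hp Hkp.
  assert (HN : 0 < INR n) by (apply lt_0_INR; lia).
  assert (HM : 0 < INR (n - k)) by (apply lt_0_INR; lia).
  rewrite (Lambda_mode n k p), ln_lik_ratio, ln_fact_ratio by (lia || lra).
  rewrite ln_div, ln_mult by (try apply Rmult_lt_0_compat; lra).
  replace (n - (n - k))%nat with k by lia.
  replace (INR k) with (INR n - INR (n - k)) by (rewrite minus_INR by lia; ring).
  field.
Qed.

Lemma Lambda_lt_neg_ln n k p : (1 <= k <= n)%nat -> 0 <= p < 1 ->
  INR k - 1 < INR n * p <= INR k -> Lambda n p < - ln (1 - p).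
Proof.
  intros Hk Hp Hkp.
  assert (HN : 0 < INR n) by (apply lt_0_INR; lia).
  assert (HK : 1 <= INR k) by (apply (le_INR 1); lia).
  pose proof (Lambda_half_ln_eq_succ n k p Hk Hp ltac:(lra)) as Hid.
  pose proof (minus_INR n k ltac:(lia)) as Hm. pose proof (pos_INR (n - k)) as Hm0.
  set (m := INR (n - k)) in *. set (u := INR n * (1 - p)) in *.
  assert (Hu : 0 < u) by (apply Rmult_lt_0_compat; lra).
  assert (Hsplit : ln (1 - p) = ln (u / (m + 1)) + ln ((m + 1) / INR n)).
  { rewrite <- ln_div_split by lra. f_equal. unfold u. field. lra. }
  assert (Hle1 : ln ((m + 1) / INR n) <= 0).
  { rewrite <- ln_1. apply ln_le; [apply Rdiv_lt_0_compat; lra|].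
    apply Rle_div_l; lra. }
  pose proof (mul_ln_div_lt (m + 1) u ltac:(lra) Hu ltac:(unfold u; lra)) as Hgap.
  pose proof (defect_sum_nonneg (S (n - k)) (k - 1) ltac:(lia)).
  lra.
Qed.

Lemma Lambda_lt_neg_half_ln n k p : (1 <= k)%nat -> (k < n)%nat -> 0 <= p < 1 ->
  INR k - 1 <= INR n * p <= INR k -> Lambda n p < - / 2 * ln (1 - INR k / INR n).
Proof.
  intros Hk1 Hkn Hp Hkp.
  assert (HN : 0 < INR n) by (apply lt_0_INR; lia).
  pose proof (Lambda_half_ln_eq n k p Hk1 Hkn Hp Hkp) as Hid.
  assert (HM : 0 < INR (n - k)) by (apply lt_0_INR; lia).
  replace (1 - INR k / INR n) with (INR (n - k) / INR n) by (rewrite minus_INR by lia; field; lra).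
  set (m := INR (n - k)) in *. set (u := INR n * (1 - p)) in *.
  assert (Hu : 0 < u) by (apply Rmult_lt_0_compat; lra).
  assert (Hsplit : ln (1 - p) = ln (u / m) + ln (m / INR n)).
  { rewrite <- ln_div_split by lra. f_equal. unfold u. field. lra. }
  pose proof (mul_ln_div_le m u HM Hu) as Hgap.
  pose proof (defect_sum_pos (n - k) k ltac:(lia) ltac:(lia)).
  lra.
Qed.

Lemma Lambda_half_ln_lt n k p : (1 <= k <= n)%nat -> 0 <= p < 1 ->
  INR k - 1 <= INR n * p <= INR k ->
  Lambda n p + ln (1 - p) / 2
    < - (INR k - 1) / (12 * INR n * (INR n - INR k + 1)) + / (8 * (INR n - INR k) + 6).
Proof.
  intros Hk Hp Hkp.
  assert (HN : 0 < INR n) by (apply lt_0_INR; lia).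
  rewrite (Lambda_half_ln_eq_succ n k p Hk Hp Hkp).
  pose proof (half_sub_mid_mul_ln_lt (n - k)) as Hnum.
  pose proof (defect_sum_ge (S (n - k)) (k - 1) ltac:(lia)) as Hsum.
  replace (S (n - k) + (k - 1))%nat with n in Hsum by lia. rewrite S_INR in Hsum.
  replace (INR k) with (INR n - INR (n - k)) by (rewrite minus_INR by lia; ring).
  pose proof (pos_INR (n - k)) as Hm0.
  set (m := INR (n - k)) in *. set (u := INR n * (1 - p)) in *.
  assert (Hu : 0 < u) by (apply Rmult_lt_0_compat; lra).
  assert (Hsplit : ln (u / (m + 1)) = ln (u / (m + / 2)) - ln (1 + / (2 * m + 1))).
  { rewrite (ln_div_split u (m + / 2)) by lra.
    replace ((m + / 2) / (m + 1)) with (/ (1 + / (2 * m + 1))) by (field; lra).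
    rewrite ln_Rinv by (apply Rplus_lt_0_compat; [lra | apply Rinv_0_lt_compat; lra]). ring. }
  pose proof (mul_ln_div_le (m + / 2) u ltac:(lra) Hu) as Hgap.
  assert (0 < / (320 * INR n ^ 3)) by (apply Rinv_0_lt_compat, Rmult_lt_0_compat; [lra | apply pow_lt; lra]).
  replace (- (INR n - m - 1) / (12 * INR n * (INR n - (INR n - m) + 1)) + / (8 * (INR n - (INR n - m)) + 6))
    with (- / (12 * (m + 1)) + / (12 * INR n) + / (8 * m + 6)) by (field; lra).
  rewrite Hsplit. lra.
Qed.

Lemma Lambda_half_ln_gt n k p : (1 <= k)%nat -> (k < n)%nat -> 0 <= p < 1 ->
  INR k - 1 <= INR n * p <= INR k ->
  Lambda n p + ln (1 - p) / 2
    > - (INR k - 1) / (12 * INR n * (INR n - INR k + 1))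
      - / (12 * (INR n - INR k) * (INR n - INR k + 1)).
Proof.
  intros Hk1 Hkn Hp Hkp.
  assert (HN : 0 < INR n) by (apply lt_0_INR; lia).
  rewrite (Lambda_half_ln_eq n k p Hk1 Hkn Hp Hkp).
  pose proof (defect_sum_lt (n - k) k ltac:(lia) ltac:(lia)) as Hsum.
  replace (n - k + k)%nat with n in Hsum by lia.
  pose proof (minus_INR n k ltac:(lia)) as Hm.
  assert (HM : 0 < INR (n - k)) by (apply lt_0_INR; lia).
  replace (INR k) with (INR n - INR (n - k)) by lra.
  set (m := INR (n - k)) in *. set (u := INR n * (1 - p)) in *.
  pose proof (sub_le_mid_mul_ln_div m u HM ltac:(unfold u; split; lra)) as Hlow.
  replace (- (INR n - m - 1) / (12 * INR n * (INR n - (INR n - m) + 1))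
           - / (12 * (INR n - (INR n - m)) * (INR n - (INR n - m) + 1)))
    with (- (/ (12 * m) - / (12 * INR n))) by (field; lra).
  lra.
Qed.

Lemma ceilR_mode n p : (1 <= n)%nat -> 0 < p < 1 ->
  exists k, IZR (ceilR (INR n * p)) = INR k /\ (1 <= k <= n)%nat
            /\ INR k - 1 < INR n * p <= INR k.
Proof.
  intros Hn Hp.
  assert (HN : 0 < INR n) by (apply lt_0_INR; lia).
  assert (Hx : 0 < INR n * p < INR n) by (split; nra).
  assert (Hceil : INR n * p <= IZR (ceilR (INR n * p)) < INR n * p + 1).
  { unfold ceilR. rewrite opp_IZR. pose proof (base_Int_part (- (INR n * p))). lra. }
  assert (Hz : (0 <= ceilR (INR n * p))%Z) by (apply le_IZR; lra).
  exists (Z.to_nat (ceilR (INR n * p))).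
  assert (Hk : INR (Z.to_nat (ceilR (INR n * p))) = IZR (ceilR (INR n * p)))
    by (rewrite (INR_IZR_INZ (Z.to_nat _)), Z2Nat.id; auto).
  rewrite Hk. split; [reflexivity|]. split; [|lra].
  split.
  - apply INR_lt. simpl. lra.
  - apply Nat.lt_succ_r, INR_lt. rewrite S_INR. lra.
Qed.

Theorem theorem3 (n : nat) (Hn : (1 <= n)%nat) :
  (* rho is a finite positive number, so Lambda_n is well defined on [0,1) *)
  (forall p, 0 <= p < 1 ->
     exists r : R, rho_bin_poiss n p = Finite r /\ 0 < r) /\
  (* continuity on [0,1) (relative to [0,1)) *)
  (forall p, 0 <= p < 1 ->
     filterlim (Lambda n) (within (fun x => 0 <= x < 1) (locally p))
               (locally (Lambda n p))) /\
  (* strictly increasing on [0,1) *)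
  (forall p q, 0 <= p -> p < q -> q < 1 -> Lambda n p < Lambda n q) /\
  Lambda n 0 = 0 /\
  (forall p, 0 < p < 1 ->
     let k := IZR (ceilR (INR n * p)) in
     Lambda n p < - ln (1 - p) /\
     (* when k = n the right-hand side is +oo and the bound is trivial *)
     (k < INR n -> Lambda n p < - / 2 * ln (1 - k / INR n)) /\
     Lambda n p + ln (1 - p) / 2
       < - (k - 1) / (12 * INR n * (INR n - k + 1)) + / (8 * (INR n - k) + 6) /\
     (* when k = n the right-hand side is -oo and the bound is trivial *)
     (k < INR n ->
       Lambda n p + ln (1 - p) / 2
         > - (k - 1) / (12 * INR n * (INR n - k + 1))
           - / (12 * (INR n - k) * (INR n - k + 1)))).
Proof.
  assert (Hn0 : (0 < n)%nat) by lia.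
  split; [|split; [|split; [|split]]].
  - intros p Hp. exists (lik_max n p).
    split; [now apply rho_bin_poiss_eq | apply lik_max_pos; lia || lra].
  - intros p Hp. now apply Lambda_continuous.
  - intros p q. now apply Lambda_lt.
  - now apply Lambda_0.
  - intros p Hp k. destruct (ceilR_mode n p Hn Hp) as [kn [Hk [Hkn Hmode]]].
    unfold k. rewrite Hk.
    assert (Hp' : 0 <= p < 1) by lra.
    assert (Hmode' : INR kn - 1 <= INR n * p <= INR kn) by lra.
    split; [|split; [|split]].
    + now apply (Lambda_lt_neg_ln n kn).
    + intros Hlt. apply Lambda_lt_neg_half_ln; [lia | apply INR_lt | |]; assumption.
    + now apply Lambda_half_ln_lt.
    + intros Hlt. apply Lambda_half_ln_gt; [lia | apply INR_lt | |]; assumption.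
Qed.
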